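(* For all $k,l\in\{1,\dots,[n/2]\}$ one has $\{J_k,J_l\}=0$, $\{F_k,F_l\}=0$ and $\{F_k,H\}=0$. Moreover, when $n$ is odd, the function $C=\dfrac{x_1x_3\cdots x_n}{x_2x_4\cdots x_{n-1}}$ is a Casimir function of the bracket $\{\cdot,\cdot\}$, i.e. $\{C,x_j\}=0$ for all $j=1,\dots,n$.
   Context: Let $n\ge1$, $(a_1,\dots,a_n)\in\mathbb R^n\setminus\{0\}$. On $\mathbb R^n$ with coordinates $x_1,\dots,x_n$ consider the Poisson bracket $\{x_i,x_j\}=x_ix_j$ for $1\le i<j\le n$ (extended by skew-symmetry and the Leibniz rule; rational functions are considered on the open dense set where their denominators do not vanish). Let $H=a_1x_1+\dots+a_nx_n$, $v_0:=0$ and $v_i:=a_1x_1+\dots+a_ix_i$ for $i=1,\dots,n$ (so $v_n=H$). For $k=1,\dots,[n/2]$ let $J_k:=\dfrac{x_1x_3\cdots x_{2k-1}}{x_2x_4\cdots x_{2k}}$. For $k=1,\dots,[(n+1)/2]$ let $F_k:=v_{2k-1}\dfrac{x_{2k+1}x_{2k+3}\cdots x_n}{x_{2k}x_{2k+2}\cdots x_{n-1}}$ if $n$ is odd, and $F_k:=v_{2k}\dfrac{x_{2k+2}x_{2k+4}\cdots x_n}{x_{2k+1}x_{2k+3}\cdots x_{n-1}}$ if $n$ is even (empty products equal $1$, so $F_{[(n+1)/2]}=H$). *)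

From Stdlib Require Import Reals Arith.
Open Scope R_scope.

(* Points of R^n are functions x : nat -> R; only x 1, ..., x n matter. *)

Fixpoint sum1 (k : nat) (f : nat -> R) : R :=
  match k with O => 0 | S m => sum1 m f + f (S m) end.

Fixpoint prod1 (k : nat) (f : nat -> R) : R :=
  match k with O => 1 | S m => prod1 m f * f (S m) end.

Definition upd (x : nat -> R) (i : nat) (t : R) : nat -> R :=
  fun j => if Nat.eqb j i then t else x j.

Definition is_partial (f : (nat -> R) -> R) (x : nat -> R) (i : nat) (d : R) : Prop :=
  derivable_pt_lim (fun t => f (upd x i t)) (x i) d.

Definition pi_str (x : nat -> R) (i j : nat) : R :=
  if Nat.ltb i j then x i * x j
  else if Nat.ltb j i then - (x i * x j) else 0.

(* PB n f g x v : f and g are (partially) differentiable at x and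
   {f,g}(x) = sum_{i,j=1}^n {x_i,x_j}(x) d_i f(x) d_j g(x) = v *)
Definition PB (n : nat) (f g : (nat -> R) -> R) (x : nat -> R) (v : R) : Prop :=
  exists df dg : nat -> R,
    (forall i, (1 <= i <= n)%nat -> is_partial f x i (df i) /\ is_partial g x i (dg i)) /\
    v = sum1 n (fun i => sum1 n (fun j => pi_str x i j * df i * dg j)).

Definition v (a : nat -> R) (i : nat) (x : nat -> R) : R := sum1 i (fun m => a m * x m).
Definition H (n : nat) (a : nat -> R) (x : nat -> R) : R := v a n x.

Definition numJ (k : nat) (x : nat -> R) : R := prod1 k (fun m => x (2 * m - 1)%nat).
Definition denJ (k : nat) (x : nat -> R) : R := prod1 k (fun m => x (2 * m)%nat).
Definition J (k : nat) (x : nat -> R) : R := numJ k x / denJ k x.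

(* F_k:
   n odd : v_{2k-1} * (x_{2k+1} x_{2k+3} ... x_n) / (x_{2k} x_{2k+2} ... x_{n-1})
           (c = (n+1)/2 - k factors each, j-th factor x_{2k+2j-1} resp. x_{2k+2j-2})
   n even: v_{2k} * (x_{2k+2} x_{2k+4} ... x_n) / (x_{2k+1} x_{2k+3} ... x_{n-1})
           (c = n/2 - k factors each, j-th factor x_{2k+2j} resp. x_{2k+2j-1}) *)
Definition numF (n k : nat) (x : nat -> R) : R :=
  if Nat.odd n then prod1 ((n + 1) / 2 - k) (fun j => x (2 * k + 2 * j - 1)%nat)
  else prod1 (n / 2 - k) (fun j => x (2 * k + 2 * j)%nat).
Definition denF (n k : nat) (x : nat -> R) : R :=
  if Nat.odd n then prod1 ((n + 1) / 2 - k) (fun j => x (2 * k + 2 * j - 2)%nat)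
  else prod1 (n / 2 - k) (fun j => x (2 * k + 2 * j - 1)%nat).
Definition F (n : nat) (a : nat -> R) (k : nat) (x : nat -> R) : R :=
  (if Nat.odd n then v a (2 * k - 1) x else v a (2 * k) x) * numF n k x / denF n k x.

Definition numC (n : nat) (x : nat -> R) : R := prod1 ((n + 1) / 2) (fun m => x (2 * m - 1)%nat).
Definition denC (n : nat) (x : nat -> R) : R := prod1 ((n - 1) / 2) (fun m => x (2 * m)%nat).
Definition Cas (n : nat) (x : nat -> R) : R := numC n x / denC n x.

From Stdlib Require Import Reals Arith Lia Lra FunctionalExtensionality.
Open Scope R_scope.

(* Write D f for the vector (x_i ∂_i f)_i.  Since {x_i, x_j} = sgn(j - i) x_i x_j,
   the bracket is {f, g} = ω(D f, D g) for the constant skew form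
   ω(A, B) = Σ_{i<j} (A_i B_j - A_j B_i), and D is a derivation.  For a Laurent
   monomial D f = f e with e its exponent vector, and D v_p = α_p := (a_i x_i)_{i ≤ p}.
   The exponent vectors of J_k, F_k and C are sums of dipoles e_q - e_{q-1} over
   consecutive pairs, and ω(e_q - e_{q-1}, B) = -(B_q + B_{q-1}); so ω against such a
   vector is a difference of two partial sums of B.  The partial sums of the α's are
   again v's, those of the dipole sums vanish at the right parity, and every bracket
   collapses to 0. *)

Lemma sum1_ext n f g :
  (forall i, (1 <= i <= n)%nat -> f i = g i) -> sum1 n f = sum1 n g.
Proof.
  induction n as [|n IH]; intros Hfg; cbn [sum1]; [reflexivity|].
  rewrite IH, Hfg by (try intros; try apply Hfg; lia); reflexivity.
Qed.

Lemma prod1_ext n f g :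
  (forall i, (1 <= i <= n)%nat -> f i = g i) -> prod1 n f = prod1 n g.
Proof.
  induction n as [|n IH]; intros Hfg; cbn [prod1]; [reflexivity|].
  rewrite IH, Hfg by (try intros; try apply Hfg; lia); reflexivity.
Qed.

Lemma sum1_zero n : sum1 n (fun _ => 0) = 0.
Proof. induction n as [|n IH]; cbn [sum1]; [|rewrite IH]; ring. Qed.

Lemma sum1_eq_zero n f : (forall i, (1 <= i <= n)%nat -> f i = 0) -> sum1 n f = 0.
Proof. intros Hf; rewrite <- (sum1_zero n); apply sum1_ext; exact Hf. Qed.

Lemma sum1_add n f g : sum1 n (fun i => f i + g i) = sum1 n f + sum1 n g.
Proof. induction n as [|n IH]; cbn [sum1]; [|rewrite IH]; ring. Qed.

Lemma sum1_sub n f g : sum1 n (fun i => f i - g i) = sum1 n f - sum1 n g.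
Proof. induction n as [|n IH]; cbn [sum1]; [|rewrite IH]; ring. Qed.

Lemma sum1_scal n c f : sum1 n (fun i => c * f i) = c * sum1 n f.
Proof. induction n as [|n IH]; cbn [sum1]; [|rewrite IH]; ring. Qed.

Lemma sum1_comm n m (h : nat -> nat -> R) :
  sum1 n (fun i => sum1 m (fun j => h i j)) = sum1 m (fun j => sum1 n (fun i => h i j)).
Proof.
  induction n as [|n IH]; cbn [sum1].
  - symmetry; apply sum1_zero.
  - rewrite IH, <- sum1_add; reflexivity.
Qed.

Lemma sum1_telescope n (g : nat -> R) :
  sum1 n (fun i => g i - g (pred i)) = g n - g O.
Proof. induction n as [|n IH]; cbn [sum1]; [|rewrite IH; cbn [pred]]; ring. Qed.

Definition kdelta (u i : nat) : R := if Nat.eqb i u then 1 else 0.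

Lemma sum1_kdelta_mul M u f : (1 <= u)%nat ->
  sum1 M (fun i => kdelta u i * f i) = if Nat.leb u M then f u else 0.
Proof.
  intros Hu; induction M as [|M IH]; cbn [sum1].
  - destruct (Nat.leb_spec u 0); [lia|reflexivity].
  - rewrite IH; unfold kdelta.
    destruct (Nat.eqb_spec (S M) u), (Nat.leb_spec u M), (Nat.leb_spec u (S M));
      try lia; subst; ring.
Qed.

Lemma sum1_kdelta M u : (1 <= u)%nat ->
  sum1 M (kdelta u) = if Nat.leb u M then 1 else 0.
Proof.
  intros Hu; rewrite <- (sum1_kdelta_mul M u (fun _ => 1) Hu).
  apply sum1_ext; intros; ring.
Qed.

(** * The skew form *)

Definition sgn_lt (i j : nat) : R :=
  if Nat.ltb i j then 1 else if Nat.ltb j i then -1 else 0.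

Definition skew (n : nat) (A B : nat -> R) : R :=
  sum1 n (fun i => sum1 n (fun j => sgn_lt i j * A i * B j)).

Lemma skew_anti n A B : skew n A B = - skew n B A.
Proof.
  enough (skew n A B + skew n B A = 0) by lra.
  unfold skew; rewrite (sum1_comm n n), <- sum1_add.
  apply sum1_eq_zero; intros i _; rewrite <- sum1_add.
  apply sum1_eq_zero; intros j _; unfold sgn_lt.
  destruct (Nat.ltb_spec i j), (Nat.ltb_spec j i); try lia; ring.
Qed.

Lemma skew_add_l n A A' B :
  skew n (fun i => A i + A' i) B = skew n A B + skew n A' B.
Proof.
  unfold skew; rewrite <- sum1_add; apply sum1_ext; intros i _.
  rewrite <- sum1_add; apply sum1_ext; intros; ring.
Qed.

Lemma skew_sub_l n A A' B :
  skew n (fun i => A i - A' i) B = skew n A B - skew n A' B.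
Proof.
  unfold skew; rewrite <- sum1_sub; apply sum1_ext; intros i _.
  rewrite <- sum1_sub; apply sum1_ext; intros; ring.
Qed.

Lemma skew_scal_l n c A B : skew n (fun i => c * A i) B = c * skew n A B.
Proof.
  unfold skew; rewrite <- sum1_scal; apply sum1_ext; intros i _.
  rewrite <- sum1_scal; apply sum1_ext; intros; ring.
Qed.

Lemma skew_add_r n A B B' :
  skew n A (fun i => B i + B' i) = skew n A B + skew n A B'.
Proof. rewrite !(skew_anti n A), skew_add_l; ring. Qed.

Lemma skew_scal_r n c A B : skew n A (fun i => c * B i) = c * skew n A B.
Proof. rewrite !(skew_anti n A), skew_scal_l; ring. Qed.

Lemma skew_sum1_l n c (F : nat -> nat -> R) B :
  skew n (fun i => sum1 c (fun j => F j i)) B = sum1 c (fun j => skew n (F j) B).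
Proof.
  induction c as [|c IH]; cbn [sum1].
  - unfold skew; apply sum1_eq_zero; intros i _; apply sum1_eq_zero; intros; ring.
  - rewrite skew_add_l, IH; reflexivity.
Qed.

Lemma skew_kdelta_l n u B : (1 <= u <= n)%nat ->
  skew n (kdelta u) B = sum1 n B - sum1 u B - sum1 (pred u) B.
Proof.
  intros Hu; unfold skew.
  transitivity (sum1 n (fun i => kdelta u i * sum1 n (fun j => sgn_lt i j * B j))).
  { apply sum1_ext; intros i _; rewrite <- sum1_scal; apply sum1_ext; intros; ring. }
  rewrite sum1_kdelta_mul by lia.
  destruct (Nat.leb_spec u n) as [_|]; [|lia].
  assert (Hrow : forall m, sum1 m (fun j => sgn_lt u j * B j) =
    if Nat.ltb m u then - sum1 m B else sum1 m B - sum1 u B - sum1 (pred u) B).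
  { induction m as [|m IH]; cbn [sum1].
    - destruct (Nat.ltb_spec 0 u); [ring|lia].
    - rewrite IH; unfold sgn_lt.
      destruct (Nat.ltb_spec m u), (Nat.ltb_spec (S m) u), (Nat.ltb_spec u (S m));
        try lia; try ring.
      replace u with (S m) by lia; cbn [pred sum1]; ring. }
  rewrite Hrow; destruct (Nat.ltb_spec n u); [lia|reflexivity].
Qed.

(** * Exponent vectors of the pair ratios *)

Definition occ (c : nat) (h : nat -> nat) (i : nat) : R :=
  sum1 c (fun j => kdelta (h j) i).

(* exponent vector of x_{p+2} x_{p+4} ... x_{p+2c} / (x_{p+1} x_{p+3} ... x_{p+2c-1}) *)
Definition pair_vec (p c : nat) (i : nat) : R :=
  occ c (fun j => p + 2 * j)%nat i - occ c (fun j => p + 2 * j - 1)%nat i.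

Lemma skew_pair_vec_l n p c B : (p + 2 * c <= n)%nat ->
  skew n (pair_vec p c) B = sum1 p B - sum1 (p + 2 * c) B.
Proof.
  intros Hn; unfold pair_vec, occ; rewrite skew_sub_l, !skew_sum1_l, <- sum1_sub.
  transitivity (sum1 c (fun j => - sum1 (p + 2 * j) B - - sum1 (p + 2 * pred j) B)).
  - apply sum1_ext; intros j Hj; rewrite !skew_kdelta_l by lia.
    replace (pred (p + 2 * j)) with (p + 2 * j - 1)%nat by lia.
    replace (pred (p + 2 * j - 1)) with (p + 2 * pred j)%nat by lia; ring.
  - rewrite sum1_telescope; replace (p + 2 * 0)%nat with p by lia; ring.
Qed.

Lemma sum1_pair_vec M p c :
  (forall j, (1 <= j <= c)%nat -> M <> (p + 2 * j - 1)%nat) ->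
  sum1 M (pair_vec p c) = 0.
Proof.
  intros HM; unfold pair_vec, occ; rewrite sum1_sub, !(sum1_comm M c), <- sum1_sub.
  apply sum1_eq_zero; intros j Hj.
  rewrite !sum1_kdelta by lia; specialize (HM j Hj).
  destruct (Nat.leb_spec (p + 2 * j) M), (Nat.leb_spec (p + 2 * j - 1) M);
    try lia; ring.
Qed.

Definition alpha (a : nat -> R) (p : nat) (x : nat -> R) (i : nat) : R :=
  sum1 p (fun m => a m * x m * kdelta m i).

Lemma sum1_alpha M a p x : sum1 M (alpha a p x) = v a (Nat.min p M) x.
Proof.
  unfold alpha; rewrite sum1_comm.
  induction p as [|p IH]; cbn [sum1]; [reflexivity|].
  rewrite IH, sum1_scal, sum1_kdelta by lia.
  destruct (Nat.leb_spec (S p) M).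
  - rewrite (Nat.min_l (S p)), (Nat.min_l p) by lia; unfold v; cbn [sum1]; ring.
  - rewrite (Nat.min_r (S p)), (Nat.min_r p) by lia; ring.
Qed.

Lemma skew_alpha_l n a p x B : (p <= n)%nat ->
  skew n (alpha a p x) B =
  sum1 p (fun m => a m * x m * (sum1 n B - sum1 m B - sum1 (pred m) B)).
Proof.
  intros Hp; unfold alpha; rewrite skew_sum1_l.
  apply sum1_ext; intros m Hm; rewrite skew_scal_l, skew_kdelta_l by lia; reflexivity.
Qed.

Lemma skew_alpha_alpha n a p q x : (p <= q <= n)%nat ->
  skew n (alpha a p x) (alpha a q x) = v a p x * (v a q x - v a p x).
Proof.
  intros Hpq; rewrite skew_alpha_l by lia.
  (* a_m x_m (v_q - v_m - v_{m-1}) = (v_m - v_{m-1}) (v_q - v_m - v_{m-1}) telescopes *)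
  transitivity (sum1 p (fun m => (v a m x * v a q x - v a m x ^ 2)
                               - (v a (pred m) x * v a q x - v a (pred m) x ^ 2))).
  - apply sum1_ext; intros m Hm.
    rewrite !sum1_alpha, (Nat.min_l q n), (Nat.min_r q m), (Nat.min_r q (pred m)) by lia.
    destruct m as [|m]; [lia|]; unfold v; cbn [sum1 pred]; ring.
  - rewrite sum1_telescope; change (v a 0 x) with 0; ring.
Qed.

(* D (v_p R) / R for the pair ratio R of [pair_ratio p c] *)
Definition F_vec (a : nat -> R) (p c : nat) (x : nat -> R) (i : nat) : R :=
  alpha a p x i + v a p x * pair_vec p c i.

Lemma skew_F_vec n a p c q c' x :
  (p <= q)%nat -> (p + 2 * c = n)%nat -> (q + 2 * c' = n)%nat ->
  skew n (F_vec a p c x) (F_vec a q c' x) = 0.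
Proof.
  intros Hpq Hp Hq; unfold F_vec.
  rewrite skew_add_l, !skew_add_r, !skew_scal_l, !skew_scal_r.
  rewrite skew_alpha_alpha by lia.
  rewrite (skew_anti n (alpha a p x)), !skew_pair_vec_l by lia.
  rewrite !sum1_alpha, (sum1_pair_vec p), (sum1_pair_vec (p + 2 * c)) by (intros; lia).
  rewrite (Nat.min_l p q), (Nat.min_l p (q + 2 * c')), (Nat.min_r q p),
    (Nat.min_l q (p + 2 * c)) by lia.
  ring.
Qed.

Lemma skew_F_vec_alpha n a p c x : (p + 2 * c = n)%nat ->
  skew n (F_vec a p c x) (alpha a n x) = 0.
Proof.
  intros Hp; unfold F_vec.
  rewrite skew_add_l, skew_scal_l, skew_alpha_alpha, skew_pair_vec_l by lia.
  rewrite !sum1_alpha, (Nat.min_r n p), Hp, Nat.min_id by lia; ring.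
Qed.

(** * Gradients *)

Definition xgrad (f : (nat -> R) -> R) (x : nat -> R) (A : nat -> R) : Prop :=
  exists df : nat -> R, forall i, is_partial f x i (df i) /\ A i = x i * df i.

Lemma PB_of_xgrad n f g x A B w :
  xgrad f x A -> xgrad g x B -> skew n A B = w -> PB n f g x w.
Proof.
  intros [df Hf] [dg Hg] <-; exists df, dg; split.
  - intros i _; exact (conj (proj1 (Hf i)) (proj1 (Hg i))).
  - unfold skew; apply sum1_ext; intros i _; apply sum1_ext; intros j _.
    rewrite (proj2 (Hf i)), (proj2 (Hg j)); unfold pi_str, sgn_lt.
    destruct (Nat.ltb i j), (Nat.ltb j i); ring.
Qed.

Lemma xgrad_ext f g x A : (forall y, f y = g y) -> xgrad g x A -> xgrad f x A.
Proof. intros Efg; replace f with g; [auto|]; extensionality y; auto. Qed.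

Lemma xgrad_eq f x A A' : (forall i, A' i = A i) -> xgrad f x A -> xgrad f x A'.
Proof. intros E [df Hf]; exists df; intros i; rewrite E; auto. Qed.

Lemma upd_same x i : upd x i (x i) = x.
Proof.
  extensionality j; unfold upd; destruct (Nat.eqb_spec j i); subst; reflexivity.
Qed.

Lemma xgrad_const r x : xgrad (fun _ => r) x (fun _ => 0).
Proof.
  exists (fun _ => 0); intros i; split; [apply (derivable_pt_lim_const r)|ring].
Qed.

Lemma xgrad_coord m x : xgrad (fun y => y m) x (fun i => x m * kdelta m i).
Proof.
  exists (kdelta m); intros i; unfold kdelta, is_partial, upd; split.
  - destruct (Nat.eqb_spec m i), (Nat.eqb_spec i m); try lia.
    + apply derivable_pt_lim_id.
    + apply (derivable_pt_lim_const (x m)).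
  - destruct (Nat.eqb_spec i m); subst; ring.
Qed.

Lemma xgrad_add f g x A B : xgrad f x A -> xgrad g x B ->
  xgrad (fun y => f y + g y) x (fun i => A i + B i).
Proof.
  intros [df Hf] [dg Hg]; exists (fun i => df i + dg i); intros i.
  destruct (Hf i) as [Df ->], (Hg i) as [Dg ->]; split.
  - exact (derivable_pt_lim_plus _ _ _ _ _ Df Dg).
  - ring.
Qed.

Lemma xgrad_mul f g x A B : xgrad f x A -> xgrad g x B ->
  xgrad (fun y => f y * g y) x (fun i => A i * g x + f x * B i).
Proof.
  intros [df Hf] [dg Hg]; exists (fun i => df i * g x + f x * dg i); intros i.
  destruct (Hf i) as [Df ->], (Hg i) as [Dg ->]; split.
  - pose proof (derivable_pt_lim_mult _ _ _ _ _ Df Dg) as D.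
    unfold mult_fct in D; cbv beta in D; rewrite upd_same in D; exact D.
  - ring.
Qed.

Lemma xgrad_div f g x A B : g x <> 0 -> xgrad f x A -> xgrad g x B ->
  xgrad (fun y => f y / g y) x (fun i => (A i * g x - f x * B i) / (g x * g x)).
Proof.
  intros Hg0 [df Hf] [dg Hg].
  exists (fun i => (df i * g x - dg i * f x) / (g x * g x)); intros i.
  destruct (Hf i) as [Df ->], (Hg i) as [Dg ->]; split.
  - assert (Hg0' : (fun t => g (upd x i t)) (x i) <> 0)
      by (cbv beta; rewrite upd_same; exact Hg0).
    pose proof (derivable_pt_lim_div _ _ _ _ _ Df Dg Hg0') as D.
    unfold div_fct, Rsqr in D; cbv beta in D; rewrite upd_same in D; exact D.
  - field; exact Hg0.
Qed.

Lemma xgrad_prod c h x :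
  xgrad (fun y => prod1 c (fun j => y (h j))) x
        (fun i => prod1 c (fun j => x (h j)) * occ c h i).
Proof.
  induction c as [|c IH]; cbn [prod1].
  - eapply xgrad_eq; [|apply xgrad_const]; intros i; unfold occ; cbn [sum1]; ring.
  - eapply xgrad_eq; [|exact (xgrad_mul _ _ _ _ _ IH (xgrad_coord (h (S c)) x))].
    intros i; unfold occ; cbn [sum1]; ring.
Qed.

Lemma xgrad_ratio c hN hD x : prod1 c (fun j => x (hD j)) <> 0 ->
  xgrad (fun y => prod1 c (fun j => y (hN j)) / prod1 c (fun j => y (hD j))) x
        (fun i => prod1 c (fun j => x (hN j)) / prod1 c (fun j => x (hD j))
                  * (occ c hN i - occ c hD i)).
Proof.
  intros HD.
  eapply xgrad_eq;
    [|exact (xgrad_div _ (fun y => prod1 c (fun j => y (hD j))) x _ _ HD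
               (xgrad_prod c hN x) (xgrad_prod c hD x))].
  intros i; cbv beta; field; exact HD.
Qed.

Lemma xgrad_v a p x : xgrad (v a p) x (alpha a p x).
Proof.
  induction p as [|p IH].
  - eapply xgrad_eq; [|apply (xgrad_const 0)]; reflexivity.
  - pose proof (xgrad_add _ _ _ _ _ IH
                  (xgrad_mul _ _ _ _ _ (xgrad_const (a (S p)) x) (xgrad_coord (S p) x))) as D.
    eapply xgrad_eq; [|exact D]; intros i; unfold alpha; cbn [sum1]; ring.
Qed.

Lemma xgrad_J k x : denJ k x <> 0 ->
  xgrad (J k) x (fun i => - J k x * pair_vec 0 k i).
Proof.
  intros HD.
  eapply xgrad_eq; [|exact (xgrad_ratio k (fun m => 2 * m - 1)%nat (fun m => 2 * m)%nat x HD)].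
  intros i; unfold pair_vec, J, numJ, denJ.
  change (fun j => 0 + 2 * j)%nat with (fun j => 2 * j)%nat.
  change (fun j => 0 + 2 * j - 1)%nat with (fun j => 2 * j - 1)%nat; ring.
Qed.

Definition pair_ratio (p c : nat) (y : nat -> R) : R :=
  prod1 c (fun j => y (p + 2 * j)%nat) / prod1 c (fun j => y (p + 2 * j - 1)%nat).

Lemma xgrad_v_pair_ratio a p c x : prod1 c (fun j => x (p + 2 * j - 1)%nat) <> 0 ->
  xgrad (fun y => v a p y * pair_ratio p c y) x
        (fun i => pair_ratio p c x * F_vec a p c x i).
Proof.
  intros HD.
  eapply xgrad_eq; [|exact (xgrad_mul _ _ _ _ _ (xgrad_v a p x) (xgrad_ratio c _ _ x HD))].
  intros i; unfold F_vec, pair_vec, pair_ratio; ring.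
Qed.

Lemma div2_double_plus m r : (r <= 1)%nat -> ((2 * m + r) / 2 = m)%nat.
Proof. intros Hr; symmetry; apply Nat.div_unique with r; lia. Qed.

Lemma F_pair_form n a k : (1 <= k <= n / 2)%nat ->
  exists p c, (p + 2 * c = n)%nat /\
    (forall y, F n a k y = v a p y * pair_ratio p c y) /\
    (forall y, denF n k y = prod1 c (fun j => y (p + 2 * j - 1)%nat)).
Proof.
  intros Hk; unfold F, numF, denF, pair_ratio.
  destruct (Nat.odd n) eqn:Hodd.
  - destruct (proj1 (Nat.odd_spec n) Hodd) as [m ->].
    rewrite div2_double_plus in Hk by lia.
    replace ((2 * m + 1 + 1) / 2)%nat with (S m)
      by (replace (2 * m + 1 + 1)%nat with (2 * S m + 0)%nat by lia;
          symmetry; apply div2_double_plus; lia).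
    exists (2 * k - 1)%nat, (S m - k)%nat; split; [lia|split]; intros y.
    + rewrite (prod1_ext _ (fun j => y (2 * k + 2 * j - 1)%nat)
                 (fun j => y (2 * k - 1 + 2 * j)%nat)) by (intros; f_equal; lia).
      rewrite (prod1_ext _ (fun j => y (2 * k + 2 * j - 2)%nat)
                 (fun j => y (2 * k - 1 + 2 * j - 1)%nat)) by (intros; f_equal; lia).
      unfold Rdiv; ring.
    + apply prod1_ext; intros; f_equal; lia.
  - assert (Hn : exists m, n = (2 * m)%nat).
    { apply Nat.even_spec; rewrite <- Nat.negb_odd, Hodd; reflexivity. }
    destruct Hn as [m ->].
    assert (Hm : (2 * m / 2 = m)%nat) by (rewrite Nat.mul_comm; apply Nat.div_mul; lia).
    exists (2 * k)%nat, (2 * m / 2 - k)%nat; split; [lia|split]; intros y; [|reflexivity].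
    unfold Rdiv; ring.
Qed.

Lemma Cas_as_J n m : n = (2 * m + 1)%nat ->
  (forall y, Cas n y = y n * J m y) /\ (forall y, denC n y = denJ m y).
Proof.
  intros ->; unfold Cas, numC, denC, J, numJ, denJ.
  replace ((2 * m + 1 + 1) / 2)%nat with (S m)
    by (replace (2 * m + 1 + 1)%nat with (2 * S m + 0)%nat by lia;
        symmetry; apply div2_double_plus; lia).
  replace ((2 * m + 1 - 1) / 2)%nat with m
    by (replace (2 * m + 1 - 1)%nat with (2 * m + 0)%nat by lia;
        symmetry; apply div2_double_plus; lia).
  split; intros y; [|reflexivity]; cbn [prod1].
  replace (2 * S m - 1)%nat with (2 * m + 1)%nat by lia; unfold Rdiv; ring.
Qed.

Lemma PB_J_J n k l x :
  (1 <= k <= n / 2)%nat -> (1 <= l <= n / 2)%nat ->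
  denJ k x <> 0 -> denJ l x <> 0 -> PB n (J k) (J l) x 0.
Proof.
  intros Hk Hl Dk Dl.
  apply (PB_of_xgrad n _ _ x _ _ _ (xgrad_J k x Dk) (xgrad_J l x Dl)).
  pose proof (Nat.Div0.mul_div_le n 2).
  rewrite skew_scal_l, skew_scal_r, skew_pair_vec_l by lia.
  rewrite !sum1_pair_vec by (intros; lia); ring.
Qed.

Lemma PB_F_F n a k l x :
  (1 <= k <= n / 2)%nat -> (1 <= l <= n / 2)%nat ->
  denF n k x <> 0 -> denF n l x <> 0 -> PB n (F n a k) (F n a l) x 0.
Proof.
  intros Hk Hl Dk Dl.
  destruct (F_pair_form n a k Hk) as (p & c & Hp & EFk & EDk).
  destruct (F_pair_form n a l Hl) as (q & c' & Hq & EFl & EDl).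
  rewrite EDk in Dk; rewrite EDl in Dl.
  apply (PB_of_xgrad n _ _ x _ _ _ (xgrad_ext _ _ _ _ EFk (xgrad_v_pair_ratio a p c x Dk))
                                   (xgrad_ext _ _ _ _ EFl (xgrad_v_pair_ratio a q c' x Dl))).
  rewrite skew_scal_l, skew_scal_r.
  destruct (Nat.le_ge_cases p q).
  - rewrite skew_F_vec by assumption; ring.
  - rewrite skew_anti, skew_F_vec by assumption; ring.
Qed.

Lemma PB_F_H n a k x :
  (1 <= k <= n / 2)%nat -> denF n k x <> 0 -> PB n (F n a k) (H n a) x 0.
Proof.
  intros Hk Dk.
  destruct (F_pair_form n a k Hk) as (p & c & Hp & EFk & EDk).
  rewrite EDk in Dk.
  apply (PB_of_xgrad n _ _ x _ _ _ (xgrad_ext _ _ _ _ EFk (xgrad_v_pair_ratio a p c x Dk))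
                                   (xgrad_v a n x)).
  rewrite skew_scal_l, skew_F_vec_alpha by exact Hp; ring.
Qed.

Lemma PB_Cas_coord n (Hodd : Nat.odd n = true) j x :
  (1 <= j <= n)%nat -> denC n x <> 0 -> PB n (Cas n) (fun y => y j) x 0.
Proof.
  intros Hj DC.
  destruct (proj1 (Nat.odd_spec n) Hodd) as [m Hm].
  destruct (Cas_as_J n m Hm) as [ECas EDen].
  rewrite EDen in DC.
  assert (DCas : xgrad (Cas n) x (fun i => Cas n x * (kdelta n i - pair_vec 0 m i))).
  { eapply xgrad_ext; [exact ECas|].
    eapply xgrad_eq; [|exact (xgrad_mul _ _ _ _ _ (xgrad_coord n x) (xgrad_J m x DC))].
    intros i; rewrite ECas; ring. }
  apply (PB_of_xgrad n _ _ x _ _ _ DCas (xgrad_coord j x)).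
  rewrite skew_scal_l, skew_scal_r, skew_sub_l, skew_kdelta_l, skew_pair_vec_l by lia.
  rewrite !sum1_kdelta by lia.
  destruct (Nat.leb_spec j n), (Nat.leb_spec j (pred n)), (Nat.leb_spec j 0),
    (Nat.leb_spec j (0 + 2 * m)); try lia; ring.
Qed.

Theorem proposition2p2 (n : nat) (a : nat -> R) :
  (1 <= n)%nat ->
  (exists i, (1 <= i <= n)%nat /\ a i <> 0) ->
  (forall (k l : nat) (x : nat -> R),
      (1 <= k <= n / 2)%nat -> (1 <= l <= n / 2)%nat ->
      denJ k x <> 0 -> denJ l x <> 0 ->
      PB n (J k) (J l) x 0) /\
  (forall (k l : nat) (x : nat -> R),
      (1 <= k <= n / 2)%nat -> (1 <= l <= n / 2)%nat ->
      denF n k x <> 0 -> denF n l x <> 0 ->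
      PB n (F n a k) (F n a l) x 0) /\
  (forall (k : nat) (x : nat -> R),
      (1 <= k <= n / 2)%nat ->
      denF n k x <> 0 ->
      PB n (F n a k) (H n a) x 0) /\
  (Nat.odd n = true ->
   forall (j : nat) (x : nat -> R),
      (1 <= j <= n)%nat ->
      denC n x <> 0 ->
      PB n (Cas n) (fun y => y j) x 0).
Proof.
  intros _ _.
  split; [exact (PB_J_J n)|].
  split; [exact (PB_F_F n a)|].
  split; [exact (PB_F_H n a)|].
  exact (PB_Cas_coord n).
Qed.
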